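(* Let $n\ge2$, $1\le m<n$, and write $n=qm+r$ with integers $q\ge1$ and $0<r\le m$. For each subset $I\subset\{1,\ldots,m\}$ with $|I|=r$, the polynomial $F_I$ on $\mathfrak q^*=\mathfrak{sl}_n\oplus m\mathbb C^n$ defined by $$F_I(A,v)=\det\bigl(v\,|\,Av\,|\,\cdots\,|\,A^{q-1}v\,|\,A^q v_I\bigr),\qquad A\in\mathfrak{sl}_n,\ v\in m\mathbb C^n,$$ is invariant under $\exp(V)$ (equivalently under the abelian ideal $V$ of $\mathfrak q$). Here $v$ is viewed as an $n\times m$ matrix, $v_I$ is the $n\times r$ submatrix of $v$ formed by the columns with indices in $I$, and the argument of $\det$ is the $n\times n$ matrix obtained by concatenating the indicated blocks.
   Context: $\mathfrak q=\mathfrak{sl}_n\ltimes V$ with $V=m(\mathbb C^n)^*$ ($m$ copies of the dual defining representation), an abelian ideal; $Q=\mathrm{SL}_n\ltimes\exp(V)$. Identify $\mathfrak{sl}_n\cong\mathfrak{sl}_n^*$ via the trace form, so $\mathfrak q^*=\mathfrak{sl}_n\oplus V^*$ with $V^*=m\mathbb C^n$. Each $F_I$ is clearly $\mathrm{SL}_n$-invariant. *)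

From HB Require Import structures.
From mathcomp Require Import all_boot all_order all_algebra.
Set Implicit Arguments. Unset Strict Implicit. Unset Printing Implicit Defensive.
Import Order.TTheory GRing.Theory Num.Theory.
Local Open Scope ring_scope.

Section Defs.
Variable R : numClosedFieldType.

Fixpoint krylov (n m : nat) (A : 'M[R]_n) (v : 'M[R]_(n, m)) (k : nat)
  : 'M[R]_(n, k * m) :=
  match k return 'M[R]_(n, k * m) with
  | 0 => 0
  | k'.+1 => row_mx v (A *m krylov A v k')
  end.

(* v_I : the n x |I| submatrix of v of the columns with index in I,
   in increasing order *)
Definition subcols (n m : nat) (v : 'M[R]_(n, m)) (I : {set 'I_m})
  : 'M[R]_(n, #|I|) := \matrix_(i < n, k < #|I|) v i (enum_val k).

(* determinant of a matrix that is square up to a cast of its column count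
   (0 if the sizes do not match; only used in the square case) *)
Definition sqdet (n k : nat) (M : 'M[R]_(n, k)) : R :=
  match k =P n with
  | ReflectT e => \det (castmx (erefl n, e) M)
  | ReflectF _ => 0
  end.

Definition F_I (n m q : nat) (I : {set 'I_m}) (A : 'M[R]_n) (v : 'M[R]_(n, m))
  : R := sqdet (row_mx (krylov A v q) (A ^+ q *m subcols v I)).

(* orthogonal projection gl_n -> sl_n (for the trace form) *)
Definition slproj (n : nat) (X : 'M[R]_n) : 'M[R]_n :=
  X - (\tr X / n%:R)%:M.

(* Coadjoint action of exp(w), w in V = m (C^n)^* (an m x n matrix whose rows
   are the m dual vectors), on q^* = sl_n (+) m C^n, with xi = (A, v),
   v an n x m matrix.  (A,v) |-> (A + pr_sl(v w), v). *)
Definition expV_act (n m : nat) (w : 'M[R]_(m, n))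
  (xi : 'M[R]_n * 'M[R]_(n, m)) : 'M[R]_n * 'M[R]_(n, m) :=
  (xi.1 + slproj (xi.2 *m w), xi.2).

End Defs.

From HB Require Import structures.
From mathcomp Require Import all_boot all_order all_algebra.
Set Implicit Arguments. Unset Strict Implicit. Unset Printing Implicit Defensive.
Import Order.TTheory GRing.Theory Num.Theory.
Local Open Scope ring_scope.

(* exp(w) replaces A by Aw = A + v w - c 1, where c = tr(v w)/n.  Since
   Aw X = A X + v (w X) - c X, each Aw^j v equals A^j v plus a combination of
   v, A v, ..., A^(j-1) v.  Hence the matrix defining F_I for (Aw, v) is the
   one for (A, v) times a block upper unitriangular matrix, of determinant 1. *)

Lemma pid_mxD (R : nzRingType) a b c r :
  pid_mx (a + r) = block_mx 1%:M 0 0 (pid_mx r) :> 'M[R]_(a + b, a + c).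
Proof.
apply/matrixP => i j; rewrite !mxE.
do ![case: split_ordP => ? -> /[!mxE]] => /=.
- by rewrite ltn_addr ?andbT.
- by rewrite ltn_eqF // ltn_addr.
- by rewrite gtn_eqF // ltn_addr.
- by rewrite eqn_add2l ltn_add2l.
Qed.

Section Krylov.
Variables (R : numClosedFieldType) (n m : nat).

Lemma sqdet_mulmx k (X : 'M[R]_(n, k)) (Y : 'M[R]_k) :
  sqdet (X *m Y) = sqdet X * \det Y.
Proof.
rewrite /sqdet; case: eqP => [e|_]; last by rewrite mul0r.
by subst k; rewrite !castmx_id det_mulmx.
Qed.

Lemma subcolsE (v : 'M[R]_(n, m)) (I : {set 'I_m}) :
  subcols v I = v *m colsub enum_val 1%:M.
Proof. by rewrite mulmx_colsub mulmx1; apply/matrixP => i k; rewrite !mxE. Qed.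

Lemma det_1_sub_shift (c : R) k :
  \det (1%:M - c *: dsubmx (pid_mx (k * m) : 'M[R]_(m + k * m, k * m))) = 1.
Proof.
elim: k => [|k IH]; first by rewrite det_mx00.
rewrite [pid_mx _](pid_mxD _ _ (k.+1 * m)) block_mxEv col_mxKd.
set P : 'M[R]_(m + k * m, k * m) := pid_mx (k * m).
rewrite -[P]vsubmxK -col_mx0 -block_mxEh scalar_mx_block scale_block_mx.
rewrite opp_block_mx add_block_mx !scaler0 !oppr0 !addr0 !add0r.
by rewrite (@det_ublock _ m (k * m)) det1 mul1r IH.
Qed.

Variables (A : 'M[R]_n) (v : 'M[R]_(n, m)).

Lemma krylov_pid k : krylov A v k = krylov A v k.+1 *m pid_mx (k * m).
Proof.
elim: k => [|k IH]; first by apply/matrixP => ? [].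
rewrite [pid_mx _](pid_mxD _ _ (k.+1 * m)) /= mul_row_block !mulmx0 addr0 add0r.
by rewrite mulmx1 -mulmxA -IH.
Qed.

Lemma expr_mulmx_krylov k : exists E, A ^+ k *m v = krylov A v k.+1 *m E.
Proof.
elim: k => [|k [E IH]].
  by exists (col_mx 1%:M 0); rewrite /= mul_row_col mulmx0 addr0 mulmx1 expr0 mul1mx.
exists (col_mx 0 E); rewrite [krylov A v k.+2]/= mul_row_col mulmx0 add0r.
by rewrite exprS -mulmxA IH mulmxA.
Qed.

Variables (w : 'M[R]_(m, n)) (c : R).
Let Aw := A + v *m w - c%:M.
Let Aw_coef k : 'M[R]_(m + k * m, k * m) :=
  col_mx (w *m krylov A v k) 1%:M - c *: pid_mx (k * m).

Lemma mulAw p (X : 'M[R]_(n, p)) : Aw *m X = A *m X + v *m (w *m X) - c *: X.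
Proof. by rewrite /Aw !mulmxBl mulmxDl mul_scalar_mx mulmxA. Qed.

Lemma mulAw_krylov k :
  Aw *m krylov A v k = krylov A v k.+1 *m Aw_coef k.
Proof.
rewrite mulAw mulmxBr -scalemxAr -krylov_pid /= mul_row_col mulmx1.
by rewrite (addrC (A *m _)).
Qed.

Lemma krylov_Aw k : exists2 U, krylov Aw v k = krylov A v k *m U & \det U = 1.
Proof.
elim: k => [|k [U KU detU]].
  by exists 1%:M; [apply/matrixP => ? [] | rewrite det_mx00].
exists (row_mx (col_mx 1%:M 0) (Aw_coef k *m U) : 'M_(m + k * m)).
  rewrite /= KU (mulmxA Aw) (mulAw_krylov k) -mulmxA.
  by rewrite mul_mx_row mul_row_col mulmx1 mulmx0 addr0.
rewrite -[Aw_coef k *m U]vsubmxK -block_mxEh (@det_ublock _ m (k * m)) det1.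
rewrite mul1r -mul_dsub_mx det_mulmx detU mulr1 linearB linearZ /= col_mxKd.
exact: det_1_sub_shift.
Qed.

Lemma expr_Aw_mulmx k : exists C, Aw ^+ k *m v = A ^+ k *m v + krylov A v k *m C.
Proof.
elim: k => [|k [C IH]]; first by exists 0; rewrite mulmx0 addr0.
have [E AkE] := expr_mulmx_krylov k.
exists (col_mx (w *m (A ^+ k *m v)) 0 - c *: E + Aw_coef k *m C).
rewrite exprS -mulmxA IH mulmxDr (mulmxA Aw (krylov A v k)) (mulAw_krylov k).
rewrite -mulmxA mulmxDr addrA; congr (_ + _).
rewrite mulAw exprS -mulmxA mulmxBr -scalemxAr -AkE /=.
by rewrite mul_row_col mulmx0 addr0 addrA.
Qed.

End Krylov.

Theorem lemma4p2 (R : numClosedFieldType) (n m q r : nat)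
  (hn : (2 <= n)%N) (hm1 : (1 <= m)%N) (hmn : (m < n)%N)
  (hq : (1 <= q)%N) (hr0 : (0 < r)%N) (hrm : (r <= m)%N)
  (hdiv : n = (q * m + r)%N)
  (I : {set 'I_m}) (hI : #|I| = r)
  (A : 'M[R]_n) (v : 'M[R]_(n, m)) (w : 'M[R]_(m, n)) :
  \tr A = 0 ->
  F_I q I (expV_act w (A, v)).1 (expV_act w (A, v)).2 = F_I q I A v.
Proof.
move=> _; rewrite /F_I /expV_act /= /slproj addrA.
set c := \tr (v *m w) / n%:R.
have [U KU detU] := krylov_Aw A v w c q.
have [C AwC] := expr_Aw_mulmx A v w c q.
rewrite !subcolsE !mulmxA KU AwC.
set S := colsub enum_val 1%:M.
have -> : row_mx (krylov A v q *m U) ((A ^+ q *m v + krylov A v q *m C) *m S)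
  = row_mx (krylov A v q) (A ^+ q *m v *m S) *m block_mx U (C *m S) 0 1%:M.
  by rewrite mul_row_block !mulmx0 !addr0 mulmx1 mulmxDl mulmxA addrC.
by rewrite sqdet_mulmx det_ublock detU det1 !mulr1.
Qed.
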